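(* Suppose $m=n$, $\Xi=\{\boldsymbol{\xi}\in\mathbb{R}^m:\boldsymbol{a}_k^{\top}\boldsymbol{\xi}\le d_k,\ k=1,\dots,l\}$ with $\boldsymbol{a}_k\in\mathbb{R}^m$, $d_k>0$, and $f_t(\boldsymbol{x},\boldsymbol{\xi})=\boldsymbol{\xi}^{\top}\boldsymbol{x}+\langle\boldsymbol{A}^t,\boldsymbol{\xi}\boldsymbol{\xi}^{\top}\rangle+(\boldsymbol{b}^t)^{\top}\boldsymbol{x}+h^t$ for all $t\in[T]$, where $\boldsymbol{A}^t\succeq0$ is symmetric, $\boldsymbol{b}^t\in\mathbb{R}^n$, $h^t\in\mathbb{R}$. Let $\tilde Z_{C_2}$ be the set of $\boldsymbol{x}\in\mathbb{R}^n$ for which there exist $\alpha_t>0$, $q_{it}\ge0$, $\boldsymbol{v}_{it}\in\mathbb{R}^m$ ($i\in[N],t\in[T]$) with, for all $i,t$, $\|\boldsymbol{v}_{it}\|_*\delta+\frac1N\sum_{j=1}^Nq_{jt}\le\epsilon\alpha_t$ and $\sup_{\boldsymbol{\xi}\in\Xi}[\boldsymbol{v}_{it}^{\top}\boldsymbol{\xi}-f_t(\boldsymbol{x},\boldsymbol{\xi})]+\alpha_t-\boldsymbol{v}_{it}^{\top}\boldsymbol{\zeta}^i-q_{it}\le0$. Then $\tilde Z_{C_2}$ equals the set of $\boldsymbol{x}\in\mathbb{R}^n$ for which there exist $\alpha_t>0$, $q_{it}\ge0$, $\boldsymbol{v}_{it}\in\mathbb{R}^m$, $u_{it}\in\mathbb{R}$,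 $\nu^{it}_k\ge0$ ($i\in[N],t\in[T],k\in[l]$) such that for all $i\in[N],t\in[T]$: $$\|\boldsymbol{v}_{it}\|_*\delta+\frac1N\sum_{j=1}^Nq_{jt}\le\epsilon\alpha_t,\qquad u_{it}-[(\boldsymbol{b}^t)^{\top}\boldsymbol{x}+h^t]+\alpha_t-\boldsymbol{v}_{it}^{\top}\boldsymbol{\zeta}^i\le q_{it},$$ $$\begin{bmatrix}\boldsymbol{A}^t&-\frac12(\boldsymbol{v}_{it}-\boldsymbol{x}-\sum_{k=1}^l\nu^{it}_k\boldsymbol{a}_k)\\-\frac12(\boldsymbol{v}_{it}-\boldsymbol{x}-\sum_{k=1}^l\nu^{it}_k\boldsymbol{a}_k)^{\top}&u_{it}-\sum_{k=1}^l\nu^{it}_kd_k\end{bmatrix}\succeq0.$$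
   Context: Setting: $\epsilon\in(0,1)$, $\delta>0$, $[T]=\{1,\dots,T\}$, $[l]=\{1,\dots,l\}$; $\boldsymbol{\zeta}^1,\dots,\boldsymbol{\zeta}^N\in\Xi$ given samples; $\|\cdot\|_*$ is the dual norm of a norm on $\mathbb{R}^m$; $\langle\boldsymbol{X},\boldsymbol{Y}\rangle=\mathrm{tr}(\boldsymbol{X}\boldsymbol{Y})$; $\succeq0$ denotes positive semidefiniteness. *)

From HB Require Import structures.
From mathcomp Require Import all_boot all_order all_algebra.
From mathcomp Require Import classical_sets reals constructive_ereal ereal.
Set Implicit Arguments. Unset Strict Implicit. Unset Printing Implicit Defensive.
Import Order.TTheory GRing.Theory Num.Theory.
Local Open Scope ring_scope.
Local Open Scope classical_set_scope.

Definition dotv {R : realType} {m : nat} (u v : 'cV[R]_m) : R := (u^T *m v) 0 0.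

Definition is_norm {R : realType} {m : nat} (nrm : 'cV[R]_m -> R) : Prop :=
  [/\ forall x, 0 <= nrm x,
      forall x, nrm x = 0 -> x = 0,
      forall (c : R) x, nrm (c *: x) = `|c| * nrm x
    & forall x y, nrm (x + y) <= nrm x + nrm y].

Definition dual_norm {R : realType} {m : nat} (nrm : 'cV[R]_m -> R)
    (v : 'cV[R]_m) : R :=
  sup [set dotv y v | y in [set y | nrm y <= 1]].

Definition psd {R : realType} {m : nat} (M : 'M[R]_m) : Prop :=
  M^T = M /\ forall z : 'cV[R]_m, 0 <= (z^T *m M *m z) 0 0.

Definition Xi {R : realType} {m l : nat} (a : 'I_l -> 'cV[R]_m) (d : 'I_l -> R)
  : set 'cV[R]_m := [set xi | forall k, dotv (a k) xi <= d k].

(* f_t(x, xi) = xi^T x + <A, xi xi^T> + b^T x + h, with <X,Y> = tr(XY). *)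
Definition fq {R : realType} {m : nat} (A : 'M[R]_m) (b : 'cV[R]_m) (h : R)
    (x xi : 'cV[R]_m) : R :=
  dotv xi x + \tr (A *m (xi *m xi^T)) + dotv b x + h.

Definition blockM {R : realType} {m : nat} (A : 'M[R]_m) (w : 'cV[R]_m) (s : R)
  : 'M[R]_(m + 1) :=
  block_mx A (- (2^-1) *: w) (- (2^-1) *: w^T) (s%:M : 'M[R]_1).

From HB Require Import structures.
From mathcomp Require Import all_boot all_order all_algebra.
From mathcomp Require Import classical_sets boolp reals constructive_ereal ereal.
From mathcomp Require Import ring lra.
Set Implicit Arguments. Unset Strict Implicit. Unset Printing Implicit Defensive.
Import Order.TTheory GRing.Theory Num.Theory.
Local Open Scope ring_scope.
Local Open Scope classical_set_scope.

(* The supremum constraint says that the concave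
   quadratic  xi |-> (v - x)'xi - xi'A xi  is bounded on the polyhedron Xi by
   s := b'x + h - alpha + v'zeta + q.  Because d > 0, the origin is a Slater
   point of Xi, so Lagrange duality gives multipliers nu >= 0 with which the
   Lagrangian is bounded by s on all of R^m; and a global bound
   w'y - y'Ay <= s holds iff [A, -w/2; -w'/2, s] is PSD, by homogenising
   (y, 1) to (y, c).  Taking u := s gives one inclusion, weak duality the other.
   The multipliers are produced one constraint at a time: for a single
   halfspace a'xi <= d0, mu is the supremum of the slopes
   (Q xi - S) / (a'xi - d0) over the points beyond it, and concavity bounds each
   such slope by the slopes (S - Q xi) / (d0 - a'xi) of the points inside. *)

Section Dotv.
Variables (R : realType) (m : nat).
Implicit Types (u v w : 'cV[R]_m).

Lemma dotvE u v : dotv u v = \sum_i u i 0 * v i 0.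
Proof. by rewrite /dotv mxE; apply: eq_bigr => i _; rewrite mxE. Qed.

Lemma dotvC u v : dotv u v = dotv v u.
Proof. by rewrite !dotvE; apply: eq_bigr => i _; rewrite mulrC. Qed.

Lemma dotvDr u v w : dotv u (v + w) = dotv u v + dotv u w.
Proof. by rewrite /dotv mulmxDr mxE. Qed.

Lemma dotvZr u v (c : R) : dotv u (c *: v) = c * dotv u v.
Proof. by rewrite /dotv -scalemxAr mxE. Qed.

Lemma dotvZl u v (c : R) : dotv (c *: u) v = c * dotv u v.
Proof. by rewrite dotvC dotvZr dotvC. Qed.

Lemma dotv0r u : dotv u 0 = 0.
Proof. by rewrite /dotv mulmx0 mxE. Qed.

Lemma dotvBl u v w : dotv (u - v) w = dotv u w - dotv v w.
Proof. by rewrite /dotv linearB /= mulmxBl !mxE. Qed.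

Lemma dotv_suml l (c : 'I_l -> R) (a : 'I_l -> 'cV[R]_m) w :
  dotv (\sum_k c k *: a k) w = \sum_k c k * dotv (a k) w.
Proof.
rewrite dotvC /dotv mulmx_sumr summxE; apply: eq_bigr => k _.
by rewrite -scalemxAr mxE -/(dotv w (a k)) dotvC.
Qed.

End Dotv.

Section QuadraticForm.
Variables (R : comPzRingType) (m : nat).
Implicit Types (A : 'M[R]_m) (u v : 'cV[R]_m).

Definition qform A u v : R := (u^T *m A *m v) 0 0.

Lemma qformDl A u1 u2 v : qform A (u1 + u2) v = qform A u1 v + qform A u2 v.
Proof. by rewrite /qform linearD /= !mulmxDl mxE. Qed.

Lemma qformZl A (c : R) u v : qform A (c *: u) v = c * qform A u v.
Proof. by rewrite /qform linearZ /= -!scalemxAl mxE. Qed.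

Lemma qformDr A u v1 v2 : qform A u (v1 + v2) = qform A u v1 + qform A u v2.
Proof. by rewrite /qform mulmxDr mxE. Qed.

Lemma qformZr A (c : R) u v : qform A u (c *: v) = c * qform A u v.
Proof. by rewrite /qform -scalemxAr mxE. Qed.

Lemma qformC A u v : A^T = A -> qform A u v = qform A v u.
Proof.
move=> symA; rewrite /qform -[in LHS](trmxK (u^T *m A *m v)) mxE.
by rewrite !trmx_mul trmxK symA mulmxA.
Qed.

Lemma mxtrace_mul_rank1 A u : \tr (A *m (u *m u^T)) = qform A u u.
Proof. by rewrite mulmxA mxtrace_mulC /qform mulmxA trace_mx11. Qed.

End QuadraticForm.

Section Concavity.
Variables (R : realType) (m : nat).
Implicit Types (C : set 'cV[R]_m) (Q : 'cV[R]_m -> R).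

Definition convex_set C := forall x y (t : R), 0 <= t <= 1 -> C x -> C y ->
  C (t *: x + (1 - t) *: y).

Definition concave Q := forall x y (t : R), 0 <= t <= 1 ->
  t * Q x + (1 - t) * Q y <= Q (t *: x + (1 - t) *: y).

Lemma concave_addr_affine Q (a : 'cV[R]_m) (c : R) :
  concave Q -> concave (fun xi => Q xi + (c - dotv a xi)).
Proof.
move=> concQ x y t t01; rewrite dotvDr !dotvZr.
have := concQ x y t t01; lra.
Qed.

Lemma concave_psd_qform (A : 'M[R]_m) (w : 'cV[R]_m) :
  psd A -> concave (fun xi => dotv w xi - qform A xi xi).
Proof.
move=> [symA A_ge0] x y t /andP[t_ge0 t_le1].
have := A_ge0 (x + (-1) *: y); rewrite -/(qform A _ _) => qxy_ge0.
have t1_ge0 : 0 <= t * (1 - t) by rewrite mulr_ge0 // subr_ge0.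
move: (mulr_ge0 t1_ge0 qxy_ge0).
rewrite dotvDr !dotvZr !(qformDl, qformDr, qformZl, qformZr) (qformC y x symA).
nra.
Qed.

Lemma Xi_convex l (a : 'I_l -> 'cV[R]_m) (d : 'I_l -> R) : convex_set (Xi a d).
Proof.
move=> x y t /andP[t_ge0 t_le1] Xx Xy k; rewrite dotvDr !dotvZr.
have := Xx k; have := Xy k; nra.
Qed.

Lemma Xi0 l (a : 'I_l -> 'cV[R]_m) (d : 'I_l -> R) :
  (forall k, 0 <= d k) -> Xi a d 0.
Proof. by move=> d_ge0 k; rewrite dotv0r. Qed.

End Concavity.

Section LagrangeHalfspace.
Variables (R : realType) (m : nat).
Variables (C : set 'cV[R]_m) (Q : 'cV[R]_m -> R) (a0 : 'cV[R]_m) (d0 S : R).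
Hypotheses (C0 : C 0) (convC : convex_set C) (concQ : concave Q) (d0_gt0 : 0 < d0).
Hypothesis QleS : forall xi, C xi -> dotv a0 xi <= d0 -> Q xi <= S.

Lemma halfspace_slope_le x1 x2 : C x1 -> C x2 ->
  dotv a0 x1 < d0 -> d0 < dotv a0 x2 ->
  (Q x2 - S) / (dotv a0 x2 - d0) <= (S - Q x1) / (d0 - dotv a0 x1).
Proof.
move=> Cx1 Cx2 x1_in x2_out.
set p := d0 - dotv a0 x1; set q := dotv a0 x2 - d0.
have p_gt0 : 0 < p by rewrite subr_gt0.
have q_gt0 : 0 < q by rewrite subr_gt0.
have pq_gt0 : 0 < p + q by rewrite addr_gt0.
pose t := q / (p + q).
have t01 : 0 <= t <= 1.
  rewrite /t divr_ge0 ?(ltW q_gt0) ?(ltW pq_gt0) //=.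
  by rewrite ler_pdivrMr // mul1r lerDr ltW.
have t1E : 1 - t = p / (p + q) by rewrite /t; field; rewrite lt0r_neq0.
have on_hyperplane : dotv a0 (t *: x1 + (1 - t) *: x2) = d0.
  rewrite dotvDr !dotvZr t1E /t.
  have -> : dotv a0 x1 = d0 - p by rewrite /p; lra.
  have -> : dotv a0 x2 = d0 + q by rewrite /q; lra.
  by field; rewrite lt0r_neq0.
have Qmid_le : Q (t *: x1 + (1 - t) *: x2) <= S.
  by apply: QleS (convC t01 Cx1 Cx2) _; rewrite on_hyperplane.
have := le_trans (concQ x1 x2 t01) Qmid_le; rewrite t1E /t => Qmix_le.
have Qcomb_le : q * Q x1 + p * Q x2 <= S * (p + q).
  have -> : q * Q x1 + p * Q x2 = (q / (p + q) * Q x1 + p / (p + q) * Q x2) * (p + q).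
    by field; rewrite lt0r_neq0.
  by rewrite ler_pM2r.
rewrite ler_pdivrMr // mulrAC ler_pdivlMr //; nra.
Qed.

Lemma lagrange_halfspace :
  exists mu, 0 <= mu /\ forall xi, C xi -> Q xi + mu * (d0 - dotv a0 xi) <= S.
Proof.
pose E := [set r : R | r = 0 \/ exists2 xi, C xi /\ d0 < dotv a0 xi &
             r = (Q xi - S) / (dotv a0 xi - d0)].
have ubE x1 : C x1 -> dotv a0 x1 < d0 -> ubound E ((S - Q x1) / (d0 - dotv a0 x1)).
  move=> Cx1 x1_in r [->|[x2 [Cx2 x2_out] ->]]; last exact: halfspace_slope_le.
  by rewrite divr_ge0 // subr_ge0 ?QleS // ltW.
have E_neq0 : E !=set0 by exists 0; left.
have supE : has_sup E.
  by split => //; exists ((S - Q 0) / (d0 - dotv a0 0)); apply: ubE; rewrite ?dotv0r.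
exists (sup E); split; first by apply: sup_upper_bound => //; left.
move=> xi Cxi; case: (ltgtP (dotv a0 xi) d0) => [xi_in|xi_out|xi_on].
- have := ge_sup E_neq0 (ubE _ Cxi xi_in).
  rewrite ler_pdivlMr ?subr_gt0 //; lra.
- have : (Q xi - S) / (dotv a0 xi - d0) <= sup E.
    by apply: sup_upper_bound => //; right; exists xi.
  rewrite ler_pdivrMr ?subr_gt0 //; lra.
- by rewrite xi_on subrr mulr0 addr0 QleS ?xi_on.
Qed.

End LagrangeHalfspace.

Lemma lagrange_polyhedron (R : realType) (m l : nat)
    (a : 'I_l -> 'cV[R]_m) (d : 'I_l -> R) (Q : 'cV[R]_m -> R) (S : R) :
  (forall k, 0 < d k) -> concave Q -> (forall xi, Xi a d xi -> Q xi <= S) ->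
  exists nu : 'I_l -> R, (forall k, 0 <= nu k) /\
    forall xi, Q xi + \sum_k nu k * (d k - dotv (a k) xi) <= S.
Proof.
elim: l a d Q S => [|l IH] a d Q S d_gt0 concQ QleS.
  by exists (fun=> 0); split=> // xi; rewrite big_ord0 addr0; apply: QleS; case.
pose a' i := a (lift ord0 i); pose d' i := d (lift ord0 i).
have [mu [mu_ge0 mu_bound]] : exists mu, 0 <= mu /\ forall xi, Xi a' d' xi ->
    Q xi + mu * (d ord0 - dotv (a ord0) xi) <= S.
  apply: lagrange_halfspace => //.
  - exact/Xi0/(fun k => ltW (d_gt0 _)).
  - exact: Xi_convex.
  - move=> xi Xi'xi xi_in; apply: QleS => k.
    by case: (unliftP ord0 k) => [j ->|->] //; apply: Xi'xi.
have concQ' := concave_addr_affine (mu *: a ord0) (mu * d ord0) concQ.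
have [|nu' [nu'_ge0 nu'_bound]] := IH a' d' _ S (fun k => d_gt0 _) concQ'.
  by move=> xi /mu_bound; rewrite dotvZl mulrBr.
exists (fun k => oapp nu' mu (unlift ord0 k)); split.
  by move=> k; case: unlift.
move=> xi; rewrite big_ord_recl unlift_none /=.
under eq_bigr do rewrite liftK /=.
by have := nu'_bound xi; rewrite dotvZl; lra.
Qed.

Section BlockMatrix.
Variables (R : realType) (m : nat).
Implicit Types (A : 'M[R]_m) (w y : 'cV[R]_m) (s c : R).

Lemma blockM_sym A w s : A^T = A -> (blockM A w s)^T = blockM A w s.
Proof.
by move=> symA; rewrite /blockM tr_block_mx symA !linearZ /= trmxK tr_scalar_mx.
Qed.

Lemma blockM_qform A w s y c :
  ((col_mx y c%:M)^T *m blockM A w s *m col_mx y c%:M) 0 0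
    = qform A y y - c * dotv w y + s * c ^+ 2.
Proof.
rewrite /blockM tr_col_mx tr_scalar_mx mul_row_block mul_row_col.
rewrite !mulmxDl !mul_scalar_mx !mul_mx_scalar -!scalemxAl -!scalemxAr.
have entryE (u : 'rV[R]_m) (v : 'cV[R]_m) : (u *m v) 0 0 = \sum_j u 0 j * v j 0.
  by rewrite mxE.
rewrite !mxE -!entryE -/(qform A y y) -/(dotv w y) -/(dotv y w) dotvC eqxx mulr1n.
by field.
Qed.

Lemma psd_blockMP A w s : psd A ->
  psd (blockM A w s) <-> forall y, dotv w y - qform A y y <= s.
Proof.
move=> [symA A_ge0]; split.
  move=> [_ M_ge0] y; have := M_ge0 (col_mx y 1%:M).
  by rewrite blockM_qform expr1n mul1r mulr1; lra.
move=> qform_le; split; first exact: blockM_sym.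
move=> z; rewrite -(vsubmxK z) (mx11_scalar (dsubmx z)) blockM_qform.
move: (usubmx z) (dsubmx z 0 0) => y c.
have [->|c_neq0] := eqVneq c 0.
  by rewrite mul0r subr0 expr0n mulr0 addr0; apply: A_ge0.
have -> : y = c *: (c^-1 *: y) by rewrite scalerA divff // scale1r.
move: (c^-1 *: y) => y'; rewrite qformZl qformZr dotvZr.
have := qform_le y'; have := sqr_ge0 c; nra.
Qed.

End BlockMatrix.

Lemma Xi_qform_le_psd_blockM (R : realType) (m l : nat)
    (a : 'I_l -> 'cV[R]_m) (d : 'I_l -> R) (A : 'M[R]_m) (w : 'cV[R]_m) (s : R) :
  (forall k, 0 < d k) -> psd A ->
  (forall xi, Xi a d xi -> dotv w xi - qform A xi xi <= s) <->
  exists nu : 'I_l -> R, (forall k, 0 <= nu k) /\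
    psd (blockM A (w - \sum_k nu k *: a k) (s - \sum_k nu k * d k)).
Proof.
move=> d_gt0 A_psd; split.
  move=> /(lagrange_polyhedron d_gt0 (concave_psd_qform w A_psd)).
  move=> [nu [nu_ge0 nu_bound]].
  exists nu; split => //; apply/psd_blockMP => // y.
  have := nu_bound y; rewrite dotvBl dotv_suml.
  under eq_bigr do rewrite mulrBr.
  rewrite sumrB; lra.
move=> [nu [nu_ge0 /psd_blockMP-/(_ A_psd) qform_le]] xi Xi_xi.
have := qform_le xi; rewrite dotvBl dotv_suml.
have : \sum_k nu k * dotv (a k) xi <= \sum_k nu k * d k.
  by apply: ler_sum => k _; rewrite ler_wpM2l.
lra.
Qed.

Lemma ereal_sup_EFin_addr_le0 (R : realType) (T : Type) (E : set T)
    (f : T -> R) (c : R) :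
  (ereal_sup [set (f x)%:E | x in E] + c%:E <= 0)%E <->
  forall x, E x -> f x + c <= 0.
Proof.
split.
  move=> sup_le x Ex; rewrite -lee_fin EFinD.
  apply: le_trans sup_le; rewrite leeD2r //.
  by apply: ereal_sup_ubound; exists x.
move=> f_le; rewrite -lee_suber_addr // sub0e -EFinN.
by apply/ereal_supP => _ [x Ex <-]; rewrite lee_fin -subr_le0 opprK f_le.
Qed.

Lemma dotv_sub_fq (R : realType) (m : nat) (A : 'M[R]_m) (b v x xi : 'cV[R]_m)
    (h : R) :
  dotv v xi - fq A b h x xi = dotv (v - x) xi - qform A xi xi - (dotv b x + h).
Proof. rewrite /fq mxtrace_mul_rank1 dotvBl (dotvC xi x); ring. Qed.

Theorem proposition2 (R : realType) (m N T l : nat)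
  (nrm : 'cV[R]_m -> R) (eps delta : R)
  (zeta : 'I_N -> 'cV[R]_m)
  (a : 'I_l -> 'cV[R]_m) (d : 'I_l -> R)
  (A : 'I_T -> 'M[R]_m) (b : 'I_T -> 'cV[R]_m) (h : 'I_T -> R) :
  is_norm nrm ->
  0 < eps < 1 -> 0 < delta -> (0 < N)%N ->
  (forall k, 0 < d k) ->
  (forall i, Xi a d (zeta i)) ->
  (forall t, psd (A t)) ->
  [set x : 'cV[R]_m |
     exists (alpha : 'I_T -> R) (q : 'I_N -> 'I_T -> R)
            (v : 'I_N -> 'I_T -> 'cV[R]_m),
       (forall t, 0 < alpha t) /\ (forall i t, 0 <= q i t) /\
       (forall i t,
          dual_norm nrm (v i t) * delta + N%:R^-1 * (\sum_(j < N) q j t)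
            <= eps * alpha t) /\
       (forall i t,
          (ereal_sup [set (dotv (v i t) xi - fq (A t) (b t) (h t) x xi)%:E
                      | xi in Xi a d]
           + (alpha t - dotv (v i t) (zeta i) - q i t)%:E <= 0)%E)]
  =
  [set x : 'cV[R]_m |
     exists (alpha : 'I_T -> R) (q : 'I_N -> 'I_T -> R)
            (v : 'I_N -> 'I_T -> 'cV[R]_m) (u : 'I_N -> 'I_T -> R)
            (nu : 'I_N -> 'I_T -> 'I_l -> R),
       (forall t, 0 < alpha t) /\ (forall i t, 0 <= q i t) /\
       (forall i t k, 0 <= nu i t k) /\
       (forall i t,
          dual_norm nrm (v i t) * delta + N%:R^-1 * (\sum_(j < N) q j t)
            <= eps * alpha t) /\
       (forall i t,
          u i t - (dotv (b t) x + h t) + alpha t - dotv (v i t) (zeta i)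
            <= q i t) /\
       (forall i t,
          psd (blockM (A t)
                 (v i t - x - \sum_(k < l) nu i t k *: a k)
                 (u i t - \sum_(k < l) nu i t k * d k)))].
Proof.
(* The norm, eps, delta, N and the samples enter both sides identically. *)
move=> _ _ _ _ d_gt0 _ A_psd.
have supE t x (v : 'cV[R]_m) (c : R) :
  (ereal_sup [set (dotv v xi - fq (A t) (b t) (h t) x xi)%:E | xi in Xi a d]
     + c%:E <= 0)%E <->
  forall xi, Xi a d xi ->
    dotv (v - x) xi - qform (A t) xi xi <= dotv (b t) x + h t - c.
  rewrite ereal_sup_EFin_addr_le0; split => le0 xi /le0; rewrite dotv_sub_fq; lra.
apply/seteqP; split => x /=.
  move=> [al [q [v [al_gt0 [q_ge0 [dual_le sup_le0]]]]]].
  pose u i t := dotv (b t) x + h t - (al t - dotv (v i t) (zeta i) - q i t).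
  have /choice[nu nuP] (p : 'I_N * 'I_T) : exists nu : 'I_l -> R,
      (forall k, 0 <= nu k) /\ psd (blockM (A p.2)
        (v p.1 p.2 - x - \sum_k nu k *: a k) (u p.1 p.2 - \sum_k nu k * d k)).
    by apply/Xi_qform_le_psd_blockM/supE.
  exists al, q, v, u, (fun i t => nu (i, t)).
  split => //; split => //; split; first by move=> i t k; case: (nuP (i, t)).
  split => //; split; first by move=> i t; rewrite /u /=; lra.
  by move=> i t; case: (nuP (i, t)).
move=> [al [q [v [u [nu [al_gt0 [q_ge0 [nu_ge0 [dual_le [u_le blockM_psd]]]]]]]]]].
exists al, q, v; split => //; split => //; split => // i t.
have qform_le : forall xi, Xi a d xi ->
    dotv (v i t - x) xi - qform (A t) xi xi <= u i t.
  apply/(Xi_qform_le_psd_blockM a _ _ d_gt0 (A_psd t)).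
  by exists (nu i t); split; [apply: nu_ge0 | apply: blockM_psd].
apply/supE => xi /qform_le; have := u_le i t; lra.
Qed.
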